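(* Let $M$ be a partial multiplication matrix and let $\mathcal{C}\subseteq\mathsf{Grid}(M)$ be a permutation class, with $\mathcal{C}^\#$ the set of $M$-gridded permutations whose underlying permutations lie in $\mathcal{C}$. Then the set of $M$-indivisible elements of $\mathcal{C}^\#$ is labelled well quasi-ordered if and only if $\mathcal{C}^\#$ is labelled well quasi-ordered. Furthermore, the same statement holds with ''labelled well quasi-ordered'' replaced by ''well quasi-ordered'' (under gridded containment).
   Context: Permutations are identified with their plots; a permutation class is a containment-closed set of permutations. A gridding matrix has entries in $\{0,1,-1\}$; an $m\times n$ one has $m$ columns, $n$ rows, $M_{ij}$ in column $i$ from the left and row $j$ from the bottom. An $M$-gridding of a permutation $\pi$ of length $L$ is a choice of vertical lines $\tfrac12=v_0\le\dots\le v_m=L+\tfrac12$ and horizontal lines $\tfrac12=h_0\le\dots\le h_n=L+\tfrac12$, not through points of $\pi$, such that in each cell $C_{ij}=\{v_{i-1}<x<v_i,\ h_{j-1}<y<h_j\}$ the points of $\pi$ are absent if $M_{ij}=0$, increasing if $M_{ij}=1$, decreasing if $M_{ij}=-1$; the result is an $M$-gridded permutation, and $\mathsf{Grid}(M)$ is the class of permutations with an $M$-gridding. Gridded containment: $\sigma^\#\le\pi^\#$ if some subsequence of $\pi$ order-isomorphic to $\sigma$ maps each point of $\sigma^\#$ to a point lying in the cell with the same index. $M$ is a partial multiplication matrix: there are fixed $c_1,\dots,c_m,r_1,\dots,r_n\in\{\pm1\}$ with $M_{ij}=c_ir_j$ for each non-zero entry. Column $i$ is oriented left-to-right if $c_i=1$,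 right-to-left otherwise; row $j$ bottom-to-top if $r_j=1$, top-to-bottom otherwise. $M$-sum: $\sigma^\#\boxplus\tau^\#$ is the $M$-gridded permutation whose points are those of $\sigma^\#$ and $\tau^\#$, each in its cell, with the relative order among points of $\sigma^\#$ and among points of $\tau^\#$ unchanged, and such that in every column (resp. row) of cells all points of $\sigma^\#$ precede all points of $\tau^\#$ in that column's (resp. row's) orientation. An $M$-gridded permutation is $M$-divisible if it equals $\sigma^\#\boxplus\tau^\#$ with both non-empty, and $M$-indivisible otherwise. A quasi-order is wqo if every infinite sequence $x_1,x_2,\dots$ has $i<j$ with $x_i\le x_j$. For a quasi-order $L$, an $L$-labelled gridded permutation is a gridded permutation with a map from its points to $L$; $(\sigma^\#,\ell_\sigma)\le(\pi^\#,\ell_\pi)$ if some gridded embedding maps each point to one whose label is $\ge$ its own. A set of gridded permutations is labelled well quasi-ordered if its set of $L$-labelled elements is wqo for every wqo $L$. *)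

From mathcomp Require Import all_boot all_algebra.
Set Implicit Arguments. Unset Strict Implicit. Unset Printing Implicit Defensive.
Import GRing.Theory Num.Theory.

(* A permutation of length L is the sequence s = [s_0; ...; s_(L-1)] of the
   values at positions 0..L-1 (its plot is {(i, s_i)}); values are 0..L-1. *)
Definition is_perm (s : seq nat) : Prop := perm_eq s (iota 0 (size s)).

Definition std (s : seq nat) : seq nat := [seq count (fun u => u < v) s | v <- s].

Definition pembeds (s t : seq nat) (f : nat -> nat) : Prop :=
  (forall i j, i < j < size s -> f i < f j) /\
  (forall i, i < size s -> f i < size t) /\
  (forall i j, i < size s -> j < size s ->
     (nth 0 s i < nth 0 s j) = (nth 0 t (f i) < nth 0 t (f j))).

Definition perm_le (s t : seq nat) : Prop := exists f, pembeds s t f.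

Definition perm_class (C : seq nat -> Prop) : Prop :=
  (forall s, C s -> is_perm s) /\
  (forall s t, is_perm s -> perm_le s t -> C t -> C s).

(* An m x n gridding matrix: m columns, n rows, M i j in column i (from the
   left, 0-based) and row j (from the bottom, 0-based). *)
Definition gridding_matrix (M : nat -> nat -> int) (m n : nat) : Prop :=
  forall i j, i < m -> j < n ->
    [|| M i j == 0%R, M i j == 1%R | M i j == (-1)%R].

Definition pm_signs (M : nat -> nat -> int) (m n : nat) (c r : nat -> int) : Prop :=
  (forall i, i < m -> (c i == 1%R) || (c i == (-1)%R)) /\
  (forall j, j < n -> (r j == 1%R) || (r j == (-1)%R)) /\
  (forall i j, i < m -> j < n -> M i j != 0%R -> M i j = (c i * r j)%R).

(* gpt = the permutation; gcol / grow = the column / row index of the cell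
   containing the point at each position.  (Since grid lines lie at
   half-integers, a gridding is the same as such a cell assignment.) *)
Record gperm := GPerm { gpt : seq nat; gcol : seq nat; grow : seq nat }.

Definition is_gridded (M : nat -> nat -> int) (m n : nat) (p : gperm) : Prop :=
  let s := gpt p in let L := size s in
  let col i := nth 0 (gcol p) i in let row i := nth 0 (grow p) i in
  is_perm s /\ size (gcol p) = L /\ size (grow p) = L /\
  (forall i, i < L -> col i < m /\ row i < n) /\
  (forall i j, i <= j < L -> col i <= col j) /\
  (forall i j, i < L -> j < L -> nth 0 s i < nth 0 s j -> row i <= row j) /\
  (forall i, i < L -> M (col i) (row i) != 0%R) /\
  (forall i j, i < j < L -> col i = col j -> row i = row j ->
     (M (col i) (row i) = 1%R -> nth 0 s i < nth 0 s j) /\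
     (M (col i) (row i) = (-1)%R -> nth 0 s j < nth 0 s i)).

Definition Grid (M : nat -> nat -> int) (m n : nat) (s : seq nat) : Prop :=
  exists p, is_gridded M m n p /\ gpt p = s.

Definition gembeds (p q : gperm) (f : nat -> nat) : Prop :=
  pembeds (gpt p) (gpt q) f /\
  (forall i, i < size (gpt p) ->
     nth 0 (gcol q) (f i) = nth 0 (gcol p) i /\
     nth 0 (grow q) (f i) = nth 0 (grow p) i).

Definition gle (p q : gperm) : Prop := exists f, gembeds p q f.

Definition Cgrid (M : nat -> nat -> int) (m n : nat) (C : seq nat -> Prop)
  (p : gperm) : Prop := is_gridded M m n p /\ C (gpt p).

Definition restrict (p : gperm) (A : bitseq) : gperm :=
  GPerm (std (mask A (gpt p))) (mask A (gcol p)) (mask A (grow p)).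

(* msum c r sg ta pi : pi = sg (+)_M ta, where the points of pi marked by A
   form (a copy of) sg and the others form ta, each in its own cell, and in
   every column (row) all points of sg precede all points of ta in the
   orientation given by c (r). *)
Definition msum (c r : nat -> int) (sg ta pi : gperm) : Prop :=
  exists A : bitseq,
    size A = size (gpt pi) /\
    restrict pi A = sg /\ restrict pi (map negb A) = ta /\
    (forall i j, i < size (gpt pi) -> j < size (gpt pi) ->
       nth false A i -> ~~ nth false A j ->
       let ci := nth 0 (gcol pi) i in let cj := nth 0 (gcol pi) j in
       let ri := nth 0 (grow pi) i in let rj := nth 0 (grow pi) j in
       let yi := nth 0 (gpt pi) i in let yj := nth 0 (gpt pi) j in
       (ci = cj -> (c ci = 1%R -> i < j) /\ (c ci = (-1)%R -> j < i)) /\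
       (ri = rj -> (r ri = 1%R -> yi < yj) /\ (r ri = (-1)%R -> yj < yi))).

Definition Mdivisible (M : nat -> nat -> int) (m n : nat) (c r : nat -> int)
  (pi : gperm) : Prop :=
  exists sg ta, is_gridded M m n sg /\ is_gridded M m n ta /\
    gpt sg <> [::] /\ gpt ta <> [::] /\ msum c r sg ta pi.

Definition quasi_order {A : Type} (le : A -> A -> Prop) : Prop :=
  (forall x, le x x) /\ (forall x y z, le x y -> le y z -> le x z).

Definition wqo_on {A : Type} (S : A -> Prop) (le : A -> A -> Prop) : Prop :=
  forall x : nat -> A, (forall k, S (x k)) ->
    exists i j, i < j /\ le (x i) (x j).

(* L-labelled gridded permutations: (p, lab) with lab i the label of the
   point at position i (values at i >= size are irrelevant). *)
Definition lgle {T : Type} (leT : T -> T -> Prop)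
  (pl ql : gperm * (nat -> T)) : Prop :=
  exists f, gembeds pl.1 ql.1 f /\
    (forall i, i < size (gpt pl.1) -> leT (pl.2 i) (ql.2 (f i))).

Definition labelled_wqo (S : gperm -> Prop) : Prop :=
  forall (T : Type) (leT : T -> T -> Prop),
    quasi_order leT -> wqo_on (fun _ : T => True) leT ->
    wqo_on (fun pl : gperm * (nat -> T) => S pl.1) (lgle leT).

(* An M-gridded permutation that is M-divisible is an M-sum of two smaller
   ones, so splitting repeatedly writes every element of C^# as an iterated
   M-sum of M-indivisible blocks: each point gets a block index, and a point of
   an earlier block precedes a point of a later one, in the orientation of every
   column and every row they share.  A labelled element thus becomes a word of
   labelled indivisible blocks, and by Higman's lemma (proved with a minimal bad
   sequence) a labelled wqo of the indivisible elements yields one of the words.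
   An embedding of words, i.e. embeddings of the blocks into an increasing
   sequence of blocks, glues to an embedding of the whole gridded permutations:
   inside a block it is given, and across two blocks the relative position and
   height of two points are forced by their cells and the orientations alone.
   The unlabelled statement is the case of a one-element label set, and the
   converse implications are restrictions to a subset. *)

From mathcomp Require Import all_boot all_algebra.
From mathcomp Require Import zify.
From Stdlib Require Import Classical ClassicalEpsilon.
Set Implicit Arguments. Unset Strict Implicit. Unset Printing Implicit Defensive.

Lemma classic_ex_minn (Q : nat -> Prop) :
  (exists n, Q n) -> exists2 n, Q n & forall k, Q k -> n <= k.
Proof.
move=> [n Qn]; apply: NNPP => no_min; elim/ltn_ind: n Qn => n IH Qn.
apply: no_min; exists n => // k Qk; rewrite leqNgt; apply/negP => /IH; exact.
Qed.

Section MinimalBadSequence.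
Variables (T : Type) (le : T -> T -> Prop) (S : T -> Prop) (sz : T -> nat).

Definition bad (x : nat -> T) : Prop :=
  (forall k, S (x k)) /\ forall i j, i < j -> ~ le (x i) (x j).

Definition agree_below (n : nat) (x y : nat -> T) : Prop :=
  forall k, k < n -> y k = x k.

Definition bad_extension (n : nat) (p x : nat -> T) : Prop := bad x /\ agree_below n p x.

Lemma least_bad_extension n p : (exists x, bad_extension n p x) ->
  exists2 x, bad_extension n p x & forall y, bad_extension n p y -> sz (x n) <= sz (y n).
Proof.
move=> [x ext_x].
have [_ [y ext_y <-] min_y] :=
  classic_ex_minn (Q := fun s => exists2 y, bad_extension n p y & sz (y n) = s)
    (ex_intro _ _ (ex_intro2 _ _ x ext_x erefl)).
by exists y => // y' ext_y'; apply: min_y; exists y'.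
Qed.

(* Nash-Williams: build the sequence term by term, each time choosing a term of
   least size among the bad sequences extending the terms chosen so far. *)
Lemma minimal_bad_seq : (exists x, bad x) ->
  exists2 z, bad z & forall n x, bad x -> agree_below n z x -> sz (z n) <= sz (x n).
Proof.
move=> [x0 bad_x0].
have next_ex (np : nat * (nat -> T)) : exists w, (exists x, bad_extension np.1 np.2 x) ->
    exists2 x, bad_extension np.1 np.2 x & x np.1 = w /\
      forall y, bad_extension np.1 np.2 y -> sz w <= sz (y np.1).
  case: (classic (exists x, bad_extension np.1 np.2 x)) => [/least_bad_extension|no_ext].
    by move=> [x ext_x min_x]; exists (x np.1) => _; exists x.
  by exists (x0 0) => /no_ext.
have [next Hnext] := choice _ next_ex.
pose fix pre n := if n is n'.+1 then
  fun k => if k < n' then pre n' k else next (n', pre n') else fun _ => x0 0.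
pose z k := next (k, pre k).
have pre_z n : agree_below n z (pre n).
  elim: n => // n IH k; rewrite ltnS leq_eqVlt => /orP[/eqP->|lt_kn] /=.
    by rewrite ltnn.
  by rewrite lt_kn IH.
have ext_pre n : exists x, bad_extension n (pre n) x.
  elim: n => [|n [x ext_x]]; first by exists x0.
  have [y [bad_y agree_y] [yn _]] := Hnext (n, pre n) (ex_intro _ x ext_x).
  exists y; split => // k; rewrite ltnS leq_eqVlt => /orP[/eqP->|lt_kn] /=.
    by rewrite ltnn.
  by rewrite lt_kn agree_y.
have z_in n : exists2 x, bad_extension n (pre n) x & x n = z n.
  have [x ext_x] := ext_pre n.
  by have [y ext_y [yn _]] := Hnext (n, pre n) (ex_intro _ x ext_x); exists y.
exists z; last first.
  move=> n x bad_x agree_x; have [_ _ [_ min_z]] := Hnext (n, pre n) (ext_pre n).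
  by apply: min_z; split=> // k lt_kn; rewrite agree_x //; apply/esym/pre_z.
split=> [k|i j lt_ij].
  by have [x [[S_x _] _] <-] := z_in k.
have [x [[_ bad_x] agree_x] xj] := z_in j.
have -> : z i = x i by rewrite agree_x //; apply/esym/pre_z.
by rewrite -xj; apply: bad_x.
Qed.

End MinimalBadSequence.

Section WqoChain.
Variables (A : Type) (le : A -> A -> Prop) (P : A -> Prop).
Hypothesis wqo_P : wqo_on P le.
Variable a : nat -> A.
Hypothesis Pa : forall k, P (a k).

Lemma wqo_eventually_dominated :
  exists N, forall i, N <= i -> exists2 j, i < j & le (a i) (a j).
Proof.
apply: NNPP => no_N.
pose maximal i := forall j, i < j -> ~ le (a i) (a j).
have late_maximal N : exists i, N <= i /\ maximal i.
  apply: NNPP => no_i; apply: no_N; exists N => i le_Ni; apply: NNPP => no_j.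
  by apply: no_i; exists i; split=> // j lt_ij le_ij; apply: no_j; exists j.
have [t Ht] := choice _ late_maximal.
pose s k := iter k (fun i => t i.+1) (t 0).
have s_maximal k : maximal (s k) by case: k => [|k]; [case: (Ht 0) | case: (Ht (s k).+1)].
have s_step k : s k < s k.+1 by case: (Ht (s k).+1).
have s_incr := homo_ltn ltn_trans s_step.
have [i [j [lt_ij le_ij]]] := wqo_P (fun k => Pa (s k)).
exact: s_maximal (s_incr _ _ lt_ij) le_ij.
Qed.

Lemma wqo_chain : exists phi : nat -> nat,
  (forall k, phi k < phi k.+1) /\ forall k, le (a (phi k)) (a (phi k.+1)).
Proof.
have [N HN] := wqo_eventually_dominated.
have next_ex i : exists j, N <= i -> i < j /\ le (a i) (a j).
  by case: (leqP N i) => [/HN [j lt_ij le_ij]|_]; [exists j | exists 0].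
have [nxt Hnxt] := choice _ next_ex.
pose phi k := iter k nxt N.
have phi_ge k : N <= phi k.
  by elim: k => //= k IH; have [lt_nxt _] := Hnxt _ IH; apply: leq_trans IH (ltnW lt_nxt).
by exists phi; split=> k; case: (Hnxt _ (phi_ge k)).
Qed.

End WqoChain.

Inductive seq_emb (A : Type) (le : A -> A -> Prop) : seq A -> seq A -> Prop :=
| seq_emb_nil w : seq_emb le [::] w
| seq_emb_skip u b w : seq_emb le u w -> seq_emb le u (b :: w)
| seq_emb_cons a u b w : le a b -> seq_emb le u w -> seq_emb le (a :: u) (b :: w).

Theorem higman (A : Type) (le : A -> A -> Prop) (P : A -> Prop) :
  (forall x y z, le x y -> le y z -> le x z) -> wqo_on P le ->
  wqo_on (List.Forall P) (seq_emb le).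
Proof.
move=> le_trans wqo_P x Px; apply: NNPP => good_x.
have bad_x : bad (seq_emb le) (List.Forall P) x.
  by split=> // i j lt_ij emb_ij; apply: good_x; exists i, j.
have [z [Pz bad_z] min_z] := minimal_bad_seq size (ex_intro _ x bad_x).
have z_cons k : exists a v, z k = a :: v.
  case E: (z k) => [|a v]; last by exists a, v.
  by case: (bad_z _ _ (ltnSn k)); rewrite E; apply: seq_emb_nil.
have [a0 [_ _]] := z_cons 0.
pose a k := head a0 (z k); pose v k := behead (z k).
have z_av k : z k = a k :: v k by rewrite /a /v; have [b [w ->]] := z_cons k.
have Pa k : P (a k) by move: (Pz k); rewrite z_av => Pk; exact: List.Forall_inv Pk.
have Pv k : List.Forall P (v k).
  by move: (Pz k); rewrite z_av => Pk; exact: List.Forall_inv_tail Pk.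
have [phi [phi_step a_step]] := wqo_chain wqo_P Pa.
have phi_incr := homo_ltn ltn_trans phi_step.
have a_incr := homo_ltn (r := fun p q => le (a p) (a q)) (fun _ _ _ => le_trans _ _ _) a_step.
(* splicing the tails v (phi _) onto z at position phi 0 gives a shorter bad sequence *)
pose y k := if k < phi 0 then z k else v (phi (k - phi 0)).
suff bad_y : bad (seq_emb le) (List.Forall P) y.
  have := min_z (phi 0) y bad_y (fun k lt_k => ltac:(by rewrite /y lt_k)).
  by rewrite /y ltnn subnn z_av /= ltnn.
split=> [k|i j lt_ij]; first by rewrite /y; case: ifP.
have phi0_le k : phi 0 <= phi k by case: k => // k; apply/ltnW/phi_incr.
rewrite /y; case: ifP => lt_i; case: ifP => lt_j.
- exact: bad_z.
- move=> emb_ij; apply: (bad_z i (phi (j - phi 0))); first exact: leq_trans lt_i (phi0_le _).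
  by rewrite (z_av (phi _)); apply: seq_emb_skip.
- by move: (ltn_trans lt_ij lt_j); rewrite lt_i.
- move=> emb_ij; have lt_ij' : i - phi 0 < j - phi 0.
    by move/negbT: lt_i; move/negbT: lt_j; rewrite -!leqNgt; lia.
  apply: (bad_z _ _ (phi_incr _ _ lt_ij')); rewrite !z_av.
  by apply: seq_emb_cons => //; apply: a_incr.
Qed.

Lemma seq_emb_nth (A : Type) (le : A -> A -> Prop) (d : A) u w : seq_emb le u w ->
  exists g : nat -> nat, (forall i j, i < j < size u -> g i < g j) /\
    forall i, i < size u -> g i < size w /\ le (nth d u i) (nth d w (g i)).
Proof.
elim=> [w0|u0 b w0 _ [g [g_incr g_le]]|a u0 b w0 le_ab _ [g [g_incr g_le]]].
- by exists id; split=> [i j|i]; rewrite /= ?ltn0 ?andbF.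
- by exists (succn \o g); split=> [i j /g_incr|i /g_le[]] /=; rewrite ltnS.
- exists (fun i => if i is i'.+1 then (g i').+1 else 0); split.
    by move=> [|i] [|j] //= lt_ij; rewrite ltnS; apply: g_incr.
  by move=> [|i] //= /g_le[lt_gi le_i]; rewrite ltnS.
Qed.

Lemma Forall_map_mem (T : eqType) (A : Type) (P : A -> Prop) (f : T -> A) s :
  (forall x, x \in s -> P (f x)) -> List.Forall P (map f s).
Proof.
elim: s => [|x s IH] Pf; constructor; first by apply: Pf; rewrite mem_head.
by apply: IH => y sy; apply: Pf; rewrite inE sy orbT.
Qed.

Section Standardisation.
Implicit Types (s : seq nat) (a b : nat).

Lemma size_std s : size (std s) = size s.
Proof. exact: size_map. Qed.

Lemma count_ltn_leq s a b : a <= b -> count (fun u => u < a) s <= count (fun u => u < b) s.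
Proof. by move=> le_ab; apply: sub_count => u /= /leq_trans; apply. Qed.

Lemma count_ltn_mem s a b : a \in s -> a < b ->
  count (fun u => u < a) s < count (fun u => u < b) s.
Proof.
move=> + lt_ab; elim: s => //= x s IH; rewrite inE => /orP[/eqP<-|/IH].
  by rewrite ltnn lt_ab add1n ltnS count_ltn_leq // ltnW.
have := @ltn_trans a x b; lia.
Qed.

Lemma nth_std_ltn s i j : i < size s -> j < size s ->
  (nth 0 (std s) i < nth 0 (std s) j) = (nth 0 s i < nth 0 s j).
Proof.
move=> lt_i lt_j; rewrite !(nth_map 0) //=.
case: (ltnP (nth 0 s i) (nth 0 s j)) => [lt_ij|le_ji]; first by rewrite count_ltn_mem // mem_nth.
by apply/negbTE; rewrite -leqNgt count_ltn_leq.
Qed.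

Lemma std_map_homo (phi : nat -> nat) s :
  {in s &, {homo phi : x y / x < y}} -> std (map phi s) = std s.
Proof.
move=> phi_homo; rewrite /std -map_comp; apply/eq_in_map => v sv /=.
rewrite count_map; apply: eq_in_count => u su /=.
case: (ltngtP u v) => [lt_uv|lt_vu|->]; last by rewrite !ltnn.
  by rewrite phi_homo.
by apply/negbTE; rewrite -leqNgt ltnW ?phi_homo.
Qed.

Lemma std_mask_std A s : std (mask A (std s)) = std (mask A s).
Proof.
rewrite [std s]/std -map_mask std_map_homo // => x y /mem_mask sx _.
exact: count_ltn_mem.
Qed.

Lemma is_perm_uniq s : is_perm s -> uniq s.
Proof. by move/perm_uniq->; apply: iota_uniq. Qed.

Lemma std_is_perm s : uniq s -> is_perm (std s).
Proof.
move=> uniq_s; have std_inj : {in s &, injective (fun v => count (fun u => u < v) s)}.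
  move=> x y sx sy /= eq_xy.
  case: (ltngtP x y) => // [lt_xy|lt_yx].
    by have := count_ltn_mem sx lt_xy; rewrite eq_xy ltnn.
  by have := count_ltn_mem sy lt_yx; rewrite eq_xy ltnn.
have uniq_std : uniq (std s) by rewrite map_inj_in_uniq.
have std_bound : {subset std s <= iota 0 (size (std s))}.
  move=> _ /mapP[v sv ->]; rewrite mem_iota size_std /=.
  rewrite -(count_predC (fun u => u < v) s) -addn1 leq_add2l -has_count.
  by apply/hasP; exists v; rewrite //= ltnn.
have [_ eq_std] := uniq_min_size uniq_std std_bound (eq_leq (size_iota _ _)).
exact: uniq_perm uniq_std (iota_uniq _ _) eq_std.
Qed.

End Standardisation.

Definition gsub (p : gperm) (I : seq nat) : gperm :=
  GPerm (std [seq nth 0 (gpt p) i | i <- I])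
        [seq nth 0 (gcol p) i | i <- I] [seq nth 0 (grow p) i | i <- I].

Lemma size_gsub p I : size (gpt (gsub p I)) = size I.
Proof. by rewrite size_std size_map. Qed.

Lemma restrict_gsub p I A : restrict (gsub p I) A = gsub p (mask A I).
Proof. by rewrite /restrict /gsub /= std_mask_std !map_mask. Qed.

Lemma gembeds_gsub p I : sorted ltn I -> all (fun i => i < size (gpt p)) I ->
  gembeds (gsub p I) p (nth 0 I).
Proof.
move=> sorted_I /allP I_lt; rewrite /gembeds /pembeds size_gsub.
have nth_lt i : i < size I -> nth 0 I i < size (gpt p) by move=> lt_i; exact: I_lt (mem_nth 0 lt_i).
split; last by move=> i lt_i; rewrite /= !(nth_map 0).
split=> [i j /andP[lt_ij lt_j]|].
  by apply: (sorted_ltn_nth ltn_trans) => //; rewrite inE (ltn_trans lt_ij).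
split=> // i j lt_i lt_j; rewrite nth_std_ltn ?size_map //.
by rewrite !(nth_map 0).
Qed.

Lemma gembeds_comp p q s f g : gembeds p q f -> gembeds q s g -> gembeds p s (g \o f).
Proof.
move=> [[f_incr [f_lt f_val]] f_cell] [[g_incr [g_lt g_val]] g_cell].
split; last first.
  move=> i lt_i /=; have [<- <-] := f_cell i lt_i.
  exact: g_cell (f_lt i lt_i).
split=> [i j /andP[lt_ij lt_j]|]; first by apply: g_incr; rewrite f_incr ?lt_ij // f_lt.
split=> [i lt_i|i j lt_i lt_j]; first exact/g_lt/f_lt.
by rewrite f_val // g_val ?f_lt.
Qed.

Section Gridded.
Variables (M : nat -> nat -> int) (m n : nat).

Lemma gridded_gembeds q p f : is_perm (gpt q) -> size (gcol q) = size (gpt q) ->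
  size (grow q) = size (gpt q) -> is_gridded M m n p -> gembeds q p f ->
  is_gridded M m n q.
Proof.
move=> perm_q size_cl size_rw [_ [_ [_ [p_bound [p_col [p_row [p_cell p_mono]]]]]]].
move=> [[f_incr [f_lt f_val]] f_cell].
do 3!split=> //.
split=> [i /[dup] lt_i /f_cell[<- <-]|]; first exact/p_bound/f_lt.
split=> [i j /andP[]|].
  rewrite leq_eqVlt => /orP[/eqP-> //|lt_ij lt_j]; have lt_i := ltn_trans lt_ij lt_j.
  have [<- _] := f_cell i lt_i; have [<- _] := f_cell j lt_j.
  by apply: p_col; rewrite ltnW ?f_incr ?lt_ij ?f_lt.
split=> [i j lt_i lt_j|].
  have [_ <-] := f_cell i lt_i; have [_ <-] := f_cell j lt_j.
  by rewrite f_val //; apply: p_row; apply: f_lt.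
split=> [i /[dup] lt_i /f_cell[<- <-]|i j /andP[lt_ij lt_j]]; first exact/p_cell/f_lt.
have lt_i := ltn_trans lt_ij lt_j; rewrite !f_val //.
have [<- <-] := f_cell i lt_i; have [<- <-] := f_cell j lt_j.
by apply: p_mono; rewrite f_incr ?lt_ij ?f_lt.
Qed.

Lemma gsub_gridded p I : is_gridded M m n p -> sorted ltn I ->
  all (fun i => i < size (gpt p)) I -> is_gridded M m n (gsub p I).
Proof.
move=> p_gr sorted_I I_lt; have [perm_p _] := p_gr.
apply: gridded_gembeds p_gr (gembeds_gsub sorted_I I_lt); rewrite ?size_gsub ?size_map //.
apply: std_is_perm; rewrite map_inj_in_uniq ?(sorted_uniq ltn_trans ltnn) //.
move=> i j /(allP I_lt) lt_i /(allP I_lt) lt_j /eqP.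
by rewrite nth_uniq ?is_perm_uniq // => /eqP.
Qed.

End Gridded.

Definition cell (p : gperm) (i : nat) : nat * nat := (nth 0 (gcol p) i, nth 0 (grow p) i).

Section Precedes.
Variables (c r : nat -> int).

(* The constraint that an M-sum imposes on a point i of its first summand and a
   point j of its second: compare with the last clause of [msum]. *)
Definition precedes (p : gperm) (i j : nat) : Prop :=
  let ci := nth 0 (gcol p) i in let cj := nth 0 (gcol p) j in
  let ri := nth 0 (grow p) i in let rj := nth 0 (grow p) j in
  let yi := nth 0 (gpt p) i in let yj := nth 0 (gpt p) j in
  (ci = cj -> (c ci = 1%R -> i < j) /\ (c ci = (-1)%R -> j < i)) /\
  (ri = rj -> (r ri = 1%R -> yi < yj) /\ (r ri = (-1)%R -> yj < yi)).

Lemma precedes_gembeds q p f i j : gembeds q p f ->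
  i < size (gpt q) -> j < size (gpt q) -> precedes q i j -> precedes p (f i) (f j).
Proof.
move=> [[f_incr [_ f_val]] f_cell] lt_i lt_j [prec_col prec_row]; rewrite /precedes.
have [-> ->] := f_cell i lt_i; have [-> ->] := f_cell j lt_j; rewrite -!f_val //.
split=> [/prec_col[pos neg]|//].
by split=> [/pos lt_ij|/neg lt_ji]; apply: f_incr; rewrite ?lt_ij ?lt_ji.
Qed.

Variables (M : nat -> nat -> int) (m n : nat).
Hypothesis signs : pm_signs M m n c r.

Lemma precedes_ltnE p i j : is_gridded M m n p ->
  i < size (gpt p) -> j < size (gpt p) -> i != j -> precedes p i j ->
  (i < j) = let ci := nth 0 (gcol p) i in let cj := nth 0 (gcol p) j in
            if ci == cj then c ci == 1%R else ci < cj.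
Proof.
move=> [_ [_ [_ [bound [col_mono _]]]]] lt_i lt_j neq_ij [prec_col _] /=.
case: eqP => [eq_col|neq_col].
  have [c_sign _] := signs; have [pos neg] := prec_col eq_col.
  case/orP: (c_sign _ (bound i lt_i).1) => /eqP c_i; first by rewrite c_i pos.
  by rewrite c_i ltnNge ltnW ?neg.
have := col_mono i j; have := col_mono j i; move/eqP: neq_col; move/eqP: neq_ij; lia.
Qed.

Lemma precedes_val_ltnE p i j : is_gridded M m n p ->
  i < size (gpt p) -> j < size (gpt p) -> i != j -> precedes p i j ->
  (nth 0 (gpt p) i < nth 0 (gpt p) j) =
    let ri := nth 0 (grow p) i in let rj := nth 0 (grow p) j in
    if ri == rj then r ri == 1%R else ri < rj.
Proof.
move=> [perm_p [_ [_ [bound [_ [row_mono _]]]]]] lt_i lt_j neq_ij [_ prec_row] /=.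
have neq_y : nth 0 (gpt p) i != nth 0 (gpt p) j by rewrite nth_uniq ?is_perm_uniq.
case: eqP => [eq_row|neq_row].
  have [_ [r_sign _]] := signs; have [pos neg] := prec_row eq_row.
  case/orP: (r_sign _ (bound i lt_i).2) => /eqP r_i; first by rewrite r_i pos.
  by rewrite r_i ltnNge ltnW ?neg.
have := row_mono i j lt_i lt_j; have := row_mono j i lt_j lt_i.
move/eqP: neq_row; move/eqP: neq_y; lia.
Qed.

Lemma precedes_agree p p' i j i' j' : is_gridded M m n p -> is_gridded M m n p' ->
  i < size (gpt p) -> j < size (gpt p) -> i' < size (gpt p') -> j' < size (gpt p') ->
  i != j -> i' != j' -> cell p' i' = cell p i -> cell p' j' = cell p j ->
  precedes p i j -> precedes p' i' j' ->
  (i < j) = (i' < j') /\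
  (nth 0 (gpt p) i < nth 0 (gpt p) j) = (nth 0 (gpt p') i' < nth 0 (gpt p') j').
Proof.
move=> p_gr p'_gr lt_i lt_j lt_i' lt_j' neq_ij neq_ij' [col_i row_i] [col_j row_j] prec prec'.
rewrite (precedes_ltnE p_gr) // (precedes_ltnE p'_gr) //.
by rewrite (precedes_val_ltnE p_gr) // (precedes_val_ltnE p'_gr) //= col_i col_j row_i row_j.
Qed.

End Precedes.

Lemma mem_mask_negb (T : eqType) (s : seq T) A x : uniq s -> size A = size s ->
  x \in s -> (x \in mask (map negb A) s) = (x \notin mask A s).
Proof.
by move=> uniq_s size_A sx; rewrite !in_mask // sx (nth_map false) // size_A index_mem.
Qed.

Lemma filter_mask_uniq (T : eqType) (a : pred T) A (s : seq T) : uniq s ->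
  filter a (mask A s) = [seq x <- s | a x && (x \in mask A s)].
Proof. by move=> uniq_s; rewrite {1}(mask_filter A uniq_s) -filter_predI. Qed.

Definition block (I : seq nat) (beta : nat -> nat) (j : nat) : seq nat :=
  [seq p <- I | beta p == j].

Section Decomposition.
Variables (M : nat -> nat -> int) (m n : nat) (c r : nat -> int).

Definition decomposition (pi : gperm) (I : seq nat) (k : nat) (beta : nat -> nat) :=
  [/\ {in I, forall p, beta p < k},
      {in I &, forall p q, beta p < beta q -> precedes c r pi p q} &
      forall j, j < k -> ~ Mdivisible M m n c r (gsub pi (block I beta j))].

Lemma decomposition_indivisible pi I : ~ Mdivisible M m n c r (gsub pi I) ->
  decomposition pi I 1 (fun=> 0).
Proof.
move=> indiv; split=> [//|p q _ _|j]; first by rewrite ltnn.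
by rewrite ltnS leqn0 => /eqP->; rewrite /block filter_predT.
Qed.

Lemma decomposition_cat pi I A k1 b1 k2 b2 : uniq I -> size A = size I ->
  {in mask A I & mask (map negb A) I, forall p q, precedes c r pi p q} ->
  decomposition pi (mask A I) k1 b1 -> decomposition pi (mask (map negb A) I) k2 b2 ->
  decomposition pi I (k1 + k2) (fun p => if p \in mask A I then b1 p else k1 + b2 p).
Proof.
move=> uniq_I size_A prec12 [lt1 prec1 indiv1] [lt2 prec2 indiv2].
set beta := fun p => if p \in mask A I then b1 p else k1 + b2 p.
have mem2 p : p \in I -> (p \in mask (map negb A) I) = (p \notin mask A I).
  exact: mem_mask_negb.
split=> [p pI|p q pI qI|j lt_j].
- rewrite /beta; case: ifP => [/lt1 lt_p|/negbT]; first exact: leq_trans lt_p (leq_addr _ _).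
  by rewrite -mem2 // => /lt2; rewrite ltn_add2l.
- rewrite /beta; case: ifP => p1; case: ifP => q1.
  + exact: prec1.
  + by move=> _; apply: prec12; rewrite // mem2 // q1.
  + by have := lt1 q q1; lia.
  + by rewrite ltn_add2l; apply: prec2; rewrite mem2 ?p1 ?q1.
case: (ltnP j k1) => [lt_jk1|le_k1j].
  have -> : block I beta j = block (mask A I) b1 j.
    rewrite /block filter_mask_uniq //; apply: eq_in_filter => p pI; rewrite /beta.
    by case: ifP => p1; rewrite ?andbT ?andbF //; apply/negbTE/eqP; lia.
  exact: indiv1.
have -> : block I beta j = block (mask (map negb A) I) b2 (j - k1).
  rewrite /block filter_mask_uniq //; apply: eq_in_filter => p pI; rewrite /beta mem2 //.
  case: ifP => p1 /=; rewrite ?andbT ?andbF; first by apply/negbTE/eqP; have := lt1 p p1; lia.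
  by apply/eqP/eqP; lia.
by apply: indiv2; lia.
Qed.

Lemma Mdivisible_split pi I : sorted ltn I -> all (fun p => p < size (gpt pi)) I ->
  Mdivisible M m n c r (gsub pi I) ->
  exists2 A, size A = size I /\
      {in mask A I & mask (map negb A) I, forall p q, precedes c r pi p q} &
    0 < size (mask A I) /\ 0 < size (mask (map negb A) I).
Proof.
move=> sorted_I I_lt [sg [ta [_ [_ [sg_ne [ta_ne [A [size_A [sg_def [ta_def sum_prec]]]]]]]]]].
rewrite size_gsub in size_A sum_prec; have uniq_I := sorted_uniq ltn_trans ltnn sorted_I.
exists A; last first.
  have size_pos J : gpt (gsub pi J) <> [::] -> 0 < size J.
    by move=> ne; rewrite lt0n -(size_gsub pi) size_eq0; apply/eqP.
  by rewrite -sg_def -ta_def !restrict_gsub in sg_ne ta_ne; split; apply: size_pos.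
split=> // p q pA qA; have pI := mem_mask pA; have qI := mem_mask qA.
move: pA qA; rewrite !in_mask // pI qI (nth_map false) ?size_A ?index_mem //= => Ap nAq.
have := precedes_gembeds (gembeds_gsub sorted_I I_lt) _ _ (sum_prec _ _ _ _ Ap nAq).
by rewrite !size_gsub !index_mem !nth_index //; apply.
Qed.

Lemma decomposition_exists pi I : sorted ltn I -> all (fun p => p < size (gpt pi)) I ->
  exists k beta, decomposition pi I k beta.
Proof.
have [N] := ubnP (size I); elim: N I => // N IH I /ltnSE le_IN sorted_I I_lt.
case: (classic (Mdivisible M m n c r (gsub pi I))) => [div|indiv]; last first.
  by exists 1, (fun=> 0); apply: decomposition_indivisible.
have [A [size_A prec12] [ne1 ne2]] := Mdivisible_split sorted_I I_lt div.
have size12 : size (mask A I) + size (mask (map negb A) I) = size I.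
  by rewrite !size_mask ?size_map // count_map count_predC.
have [k1 [b1 dec1]] : exists k1 b1, decomposition pi (mask A I) k1 b1.
  by apply: IH; [lia | exact: (sorted_mask ltn_trans) | exact: all_mask].
have [k2 [b2 dec2]] : exists k2 b2, decomposition pi (mask (map negb A) I) k2 b2.
  by apply: IH; [lia | exact: (sorted_mask ltn_trans) | exact: all_mask].
exists (k1 + k2), (fun p => if p \in mask A I then b1 p else k1 + b2 p).
by apply: decomposition_cat => //; apply: (sorted_uniq ltn_trans ltnn).
Qed.

Lemma decomposition_iota pi :
  exists k beta, decomposition pi (iota 0 (size (gpt pi))) k beta.
Proof.
by apply: decomposition_exists (iota_ltn_sorted 0 _) _; apply/allP => p; rewrite mem_iota.
Qed.

End Decomposition.

Lemma ltn_neq_swap a b : a != b -> (a < b) = ~~ (b < a).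
Proof. by rewrite ltnNge leq_eqVlt eq_sym => /negbTE->. Qed.

Lemma sorted_block L beta j : sorted ltn (block (iota 0 L) beta j).
Proof. exact: (sorted_filter ltn_trans) (iota_ltn_sorted 0 L). Qed.

Lemma mem_block L beta j p : (p \in block (iota 0 L) beta j) = (beta p == j) && (p < L).
Proof. by rewrite mem_filter mem_iota. Qed.

Lemma all_block L beta j : all (fun p => p < L) (block (iota 0 L) beta j).
Proof. by apply/allP => p; rewrite mem_block => /andP[]. Qed.

Definition letter (T : Type) (pl : gperm * (nat -> T)) (beta : nat -> nat) (j : nat) :=
  let B := block (iota 0 (size (gpt pl.1))) beta j in (gsub pl.1 B, pl.2 \o nth 0 B).

Lemma letter_gembeds (T : Type) (leT : T -> T -> Prop) pi rho lab lab' beta gamma j j' :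
  let B := block (iota 0 (size (gpt pi))) beta j in
  lgle leT (letter (pi, lab) beta j) (letter (rho, lab') gamma j') ->
  exists e, gembeds (gsub pi B) rho e /\
    forall t, t < size B -> gamma (e t) = j' /\ leT (lab (nth 0 B t)) (lab' (e t)).
Proof.
move=> B [h [h_emb h_lab]]; set B' := block (iota 0 (size (gpt rho))) gamma j'.
exists (nth 0 B' \o h); split.
  exact: gembeds_comp h_emb (gembeds_gsub (sorted_block _ _ _) (all_block _ _ _)).
move=> t lt_t; rewrite size_gsub in h_lab; split; last exact: h_lab.
have [[_ [h_lt _]] _] := h_emb; have := h_lt t; rewrite !size_gsub => /(_ lt_t) lt_ht.
by have := mem_nth 0 lt_ht; rewrite mem_block => /andP[/eqP].
Qed.

Section Glue.
Variables (M : nat -> nat -> int) (m n : nat) (c r : nat -> int).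
Hypothesis signs : pm_signs M m n c r.
Variables (T : Type) (leT : T -> T -> Prop) (pi rho : gperm) (lab lab' : nat -> T).
Variables (k : nat) (beta gamma g : nat -> nat) (E : nat -> nat -> nat).
Hypotheses (pi_gr : is_gridded M m n pi) (rho_gr : is_gridded M m n rho).
Let L := size (gpt pi).
Let L' := size (gpt rho).
Let B j := block (iota 0 L) beta j.
Hypothesis beta_lt : forall p, p < L -> beta p < k.
Hypothesis pi_prec : forall p q, p < L -> q < L -> beta p < beta q -> precedes c r pi p q.
Hypothesis rho_prec :
  forall p q, p < L' -> q < L' -> gamma p < gamma q -> precedes c r rho p q.
Hypothesis g_incr : forall i j, i < j < k -> g i < g j.
Hypothesis E_emb : forall j, j < k -> gembeds (gsub pi (B j)) rho (E j).
Hypothesis E_block : forall j t, j < k -> t < size (B j) ->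
  gamma (E j t) = g j /\ leT (lab (nth 0 (B j) t)) (lab' (E j t)).

Definition glue p := E (beta p) (index p (B (beta p))).

Lemma glue_point p : p < L ->
  [/\ glue p < L', cell rho (glue p) = cell pi p,
      gamma (glue p) = g (beta p) & leT (lab p) (lab' (glue p))].
Proof.
move=> lt_p; have pB : p \in B (beta p) by rewrite mem_block eqxx.
have lt_t : index p (B (beta p)) < size (B (beta p)) by rewrite index_mem.
have [[_ [E_lt _]] E_cell] := E_emb (beta_lt lt_p); rewrite size_gsub in E_lt E_cell.
have [gamma_E lab_E] := E_block (beta_lt lt_p) lt_t; rewrite nth_index // in lab_E.
split=> //; first exact: E_lt.
rewrite /cell /glue; have [-> ->] := E_cell _ lt_t.
by rewrite /= !(nth_map 0) ?nth_index.
Qed.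

Lemma glue_same_block p q : p < L -> q < L -> beta p = beta q ->
  (p < q -> glue p < glue q) /\
  (nth 0 (gpt pi) p < nth 0 (gpt pi) q) = (nth 0 (gpt rho) (glue p) < nth 0 (gpt rho) (glue q)).
Proof.
move=> lt_p lt_q eq_beta; rewrite /glue eq_beta.
have pB : p \in B (beta q) by rewrite mem_block -eq_beta eqxx.
have qB : q \in B (beta q) by rewrite mem_block eqxx.
have [[E_incr [_ E_val]] _] := E_emb (beta_lt lt_q); rewrite size_gsub in E_incr E_val.
split=> [lt_pq|].
  apply: E_incr; rewrite index_mem qB andbT.
  case: (ltngtP (index p _) (index q _)) => // [lt_qp|eq_pq].
    by have := sorted_ltn_index ltn_trans (sorted_block _ _ _) _ _ qB pB lt_qp; lia.
  by have := congr1 (nth 0 (B (beta q))) eq_pq; rewrite !nth_index // => eq; lia.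
rewrite -E_val ?index_mem // nth_std_ltn ?size_map ?index_mem //.
by rewrite !(nth_map 0) ?index_mem // !nth_index.
Qed.

Lemma gamma_glue_ltn p q : p < L -> q < L -> beta p < beta q ->
  gamma (glue p) < gamma (glue q).
Proof.
move=> lt_p lt_q lt_b; have [_ _ -> _] := glue_point lt_p; have [_ _ -> _] := glue_point lt_q.
by apply: g_incr; rewrite lt_b beta_lt.
Qed.

Lemma glue_cross_ltn p q : p < L -> q < L -> beta p < beta q ->
  (p < q) = (glue p < glue q) /\
  (nth 0 (gpt pi) p < nth 0 (gpt pi) q) = (nth 0 (gpt rho) (glue p) < nth 0 (gpt rho) (glue q)).
Proof.
move=> lt_p lt_q lt_b; have lt_gamma := gamma_glue_ltn lt_p lt_q lt_b.
have [lt_gp cell_p _ _] := glue_point lt_p; have [lt_gq cell_q _ _] := glue_point lt_q.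
apply: (precedes_agree signs pi_gr rho_gr) => //; try exact: pi_prec; try exact: rho_prec.
  by apply: contraTneq lt_b => ->; rewrite ltnn.
by apply: contraTneq lt_gamma => ->; rewrite ltnn.
Qed.

Lemma glue_cross p q : p < L -> q < L -> beta p != beta q ->
  (p < q) = (glue p < glue q) /\
  (nth 0 (gpt pi) p < nth 0 (gpt pi) q) = (nth 0 (gpt rho) (glue p) < nth 0 (gpt rho) (glue q)).
Proof.
move=> lt_p lt_q neq_b.
case: (ltngtP (beta p) (beta q)) => [lt_b|gt_b|eq_b]; last by rewrite eq_b eqxx in neq_b.
  exact: glue_cross_ltn.
have [pos val] := glue_cross_ltn lt_q lt_p gt_b.
have neq_pq : p != q by apply: contraTneq gt_b => ->; rewrite ltnn.
have neq_g : glue p != glue q.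
  by apply: contraTneq (gamma_glue_ltn lt_q lt_p gt_b) => ->; rewrite ltnn.
have [[perm_pi _] [perm_rho _]] := (pi_gr, rho_gr).
have [lt_gp _ _ _] := glue_point lt_p; have [lt_gq _ _ _] := glue_point lt_q.
rewrite (ltn_neq_swap neq_pq) (ltn_neq_swap neq_g) pos; split=> //.
rewrite [LHS]ltn_neq_swap ?nth_uniq ?is_perm_uniq // val.
by rewrite [RHS]ltn_neq_swap ?nth_uniq ?is_perm_uniq.
Qed.

Lemma glue_lgle : lgle leT (pi, lab) (rho, lab').
Proof.
exists glue; split=> [|p lt_p]; last by have [] := glue_point lt_p.
split=> [|p lt_p]; last by have [_ [-> ->] _ _] := glue_point lt_p.
split=> [p q /andP[lt_pq lt_q]|].
  have lt_p := ltn_trans lt_pq lt_q; case: (eqVneq (beta p) (beta q)) => [eq_b|neq_b].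
    exact: (glue_same_block lt_p lt_q eq_b).1.
  by rewrite -(glue_cross lt_p lt_q neq_b).1.
split=> [p /glue_point[] //|p q lt_p lt_q].
case: (eqVneq (beta p) (beta q)) => [eq_b|neq_b].
  exact: (glue_same_block lt_p lt_q eq_b).2.
exact: (glue_cross lt_p lt_q neq_b).2.
Qed.

End Glue.

Lemma lgle_letters (M : nat -> nat -> int) (m n : nat) (c r : nat -> int)
    (T : Type) (leT : T -> T -> Prop) pi rho lab lab' k beta k' gamma g :
  pm_signs M m n c r -> is_gridded M m n pi -> is_gridded M m n rho ->
  decomposition M m n c r pi (iota 0 (size (gpt pi))) k beta ->
  decomposition M m n c r rho (iota 0 (size (gpt rho))) k' gamma ->
  (forall i j, i < j < k -> g i < g j) ->
  (forall j, j < k -> lgle leT (letter (pi, lab) beta j) (letter (rho, lab') gamma (g j))) ->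
  lgle leT (pi, lab) (rho, lab').
Proof.
move=> signs pi_gr rho_gr [beta_lt pi_prec _] [_ rho_prec _] g_incr letters_le.
pose B j := block (iota 0 (size (gpt pi))) beta j.
have E_ex j : exists e, j < k -> gembeds (gsub pi (B j)) rho e /\
    forall t, t < size (B j) -> gamma (e t) = g j /\ leT (lab (nth 0 (B j) t)) (lab' (e t)).
  by case: (ltnP j k) => [/letters_le/letter_gembeds[e He]|_]; [exists e | exists id].
have [E HE] := choice _ E_ex.
apply: (glue_lgle signs pi_gr rho_gr (k := k) (beta := beta) (gamma := gamma) (g := g) (E := E))
  => // [p lt_p|p q lt_p lt_q|p q lt_p lt_q|j /HE[]|j t /HE[_ E_block]] //.
- by apply: beta_lt; rewrite mem_iota.
- by apply: pi_prec; rewrite mem_iota.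
- by apply: rho_prec; rewrite mem_iota.
- exact: E_block.
Qed.

Lemma lgle_trans (T : Type) (leT : T -> T -> Prop) :
  (forall x y z, leT x y -> leT y z -> leT x z) ->
  forall x y z, lgle leT x y -> lgle leT y z -> lgle leT x z.
Proof.
move=> leT_trans x y z [f [f_emb f_lab]] [h [h_emb h_lab]].
exists (h \o f); split; first exact: gembeds_comp f_emb h_emb.
have [[_ [f_lt _]] _] := f_emb.
by move=> i lt_i; apply: leT_trans (f_lab i lt_i) (h_lab _ (f_lt i lt_i)).
Qed.

Section Core.
Variables (M : nat -> nat -> int) (m n : nat) (c r : nat -> int) (C : seq nat -> Prop).
Hypothesis signs : pm_signs M m n c r.
Hypothesis class_C : perm_class C.

Lemma Cgrid_block pi k beta j : Cgrid M m n C pi ->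
  decomposition M m n c r pi (iota 0 (size (gpt pi))) k beta -> j < k ->
  let q := gsub pi (block (iota 0 (size (gpt pi))) beta j) in
  Cgrid M m n C q /\ ~ Mdivisible M m n c r q.
Proof.
move=> [pi_gr C_pi] [_ _ indiv] lt_j q; split; last exact: indiv.
have B_sorted := sorted_block (size (gpt pi)) beta j.
have B_lt := all_block (size (gpt pi)) beta j.
have q_gr : is_gridded M m n q := gsub_gridded pi_gr B_sorted B_lt; split=> //.
have [B_emb _] := gembeds_gsub B_sorted B_lt.
by apply: class_C.2 C_pi; [case: q_gr | eexists; exact: B_emb].
Qed.

Theorem Cgrid_lwqo_of_indivisible (T : Type) (leT : T -> T -> Prop) :
  (forall x y z, leT x y -> leT y z -> leT x z) ->
  wqo_on (fun pl : gperm * (nat -> T) => Cgrid M m n C pl.1 /\ ~ Mdivisible M m n c r pl.1)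
    (lgle leT) ->
  wqo_on (fun pl : gperm * (nat -> T) => Cgrid M m n C pl.1) (lgle leT).
Proof.
move=> leT_trans wqo_indiv x Cx.
have decomp_ex i : exists kb : nat * (nat -> nat),
    decomposition M m n c r (x i).1 (iota 0 (size (gpt (x i).1))) kb.1 kb.2.
  by have [k [beta dec]] := decomposition_iota M m n c r (x i).1; exists (k, beta).
have [D D_dec] := choice _ decomp_ex.
pose word i := [seq letter (x i) (D i).2 j | j <- iota 0 (D i).1].
have word_indiv i : List.Forall
    (fun pl : gperm * (nat -> T) => Cgrid M m n C pl.1 /\ ~ Mdivisible M m n c r pl.1) (word i).
  apply: Forall_map_mem => j; rewrite mem_iota => /andP[_ lt_j].
  by case: (x i) (Cx i) (D_dec i) => pi lab C_pi dec_pi; apply: Cgrid_block C_pi dec_pi lt_j.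
have [i [j [lt_ij word_emb]]] := higman (lgle_trans leT_trans) wqo_indiv word_indiv.
have [g [g_incr g_le]] := seq_emb_nth (letter (x i) (D i).2 0) word_emb.
rewrite /word !size_map !size_iota in g_incr g_le.
exists i, j; split=> //; move: (Cx i) (Cx j) (D_dec i) (D_dec j) g_le.
case: (x i) (x j) => [pi lab] [rho lab'] [pi_gr _] [rho_gr _] /= dec_pi dec_rho g_le.
apply: lgle_letters signs pi_gr rho_gr dec_pi dec_rho g_incr _ => t lt_t.
by have [lt_gt] := g_le t lt_t; rewrite !(nth_map 0) ?size_iota // !nth_iota // !add0n.
Qed.
End Core.

Lemma wqo_on_sub (A : Type) (S S' : A -> Prop) (le : A -> A -> Prop) :
  (forall a, S' a -> S a) -> wqo_on S le -> wqo_on S' le.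
Proof. by move=> S'S wqo_S x S'x; apply: wqo_S => k; apply: S'S. Qed.

Lemma wqo_gle_unit_labels (S : gperm -> Prop) :
  wqo_on S gle <->
  wqo_on (fun pl : gperm * (nat -> unit) => S pl.1) (lgle (fun _ _ => True)).
Proof.
split=> [wqo_S x Sx | lwqo_S x Sx].
  have [i [j [lt_ij [f f_emb]]]] := wqo_S (fun k => (x k).1) Sx.
  by exists i, j; split=> //; exists f.
have [i [j [lt_ij [f [f_emb _]]]]] := lwqo_S (fun k => (x k, fun=> tt)) Sx.
by exists i, j; split=> //; exists f.
Qed.

Theorem lemma4p8 (m n : nat) (M : nat -> nat -> int) (c r : nat -> int)
  (C : seq nat -> Prop) :
  gridding_matrix M m n -> pm_signs M m n c r ->
  perm_class C -> (forall s, C s -> Grid M m n s) ->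
  (labelled_wqo (fun p => Cgrid M m n C p /\ ~ Mdivisible M m n c r p)
     <-> labelled_wqo (Cgrid M m n C)) /\
  (wqo_on (fun p => Cgrid M m n C p /\ ~ Mdivisible M m n c r p) gle
     <-> wqo_on (Cgrid M m n C) gle).
Proof.
move=> _ signs class_C _; have lwqo_Cgrid := Cgrid_lwqo_of_indivisible signs class_C.
split; [split=> [lwqo_indiv | lwqo_C] | split=> [wqo_indiv | wqo_C]].
- by move=> T leT qo wqo_T; apply: lwqo_Cgrid qo.2 _; apply: lwqo_indiv.
- by move=> T leT qo wqo_T; apply: wqo_on_sub (lwqo_C T leT qo wqo_T) => ? [].
- apply/(wqo_gle_unit_labels (Cgrid M m n C))/lwqo_Cgrid => //.
  exact/(wqo_gle_unit_labels (fun p => Cgrid M m n C p /\ ~ Mdivisible M m n c r p)).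
- by apply: wqo_on_sub wqo_C => ? [].
Qed.
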